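(* Let $d\ge2$, $\alpha\in(0,\infty)^d$, $N\in\mathbb Z_+$. For every $0\le m\le N$ and all $r,s\in N\Delta_{(d-1)}$, $$\xi^{H,\alpha}_m(r,s)=\sum_{l=0}^{m}b_{ml}\,\chi^{H,\alpha}_l(r,s),\qquad b_{ml}=\sum_{n=l}^{m}\left(\frac{N_{[n]}}{(|\alpha|+N)_{(n)}}\right)^2\frac{m_{[n]}}{(|\alpha|+m)_{(n)}}\,a^{|\alpha|}_{nl}.$$
   Context: $N\Delta_{(d-1)}=\{r\in\mathbb Z_+^d:|r|=N\}$, $|v|=\sum_iv_i$. $(c)_{(k)}=\Gamma(c+k)/\Gamma(c)$, $c_{[k]}=c(c-1)\cdots(c-k+1)$. $DM_\beta(l;M)=\binom{M}{l}\prod_i(\beta_i)_{(l_i)}/(|\beta|)_{(M)}$ for $l\in\mathbb Z_+^d$ with $|l|=M$. $\xi^{H,\alpha}_m(r,s)=\sum_{|l|=m}DM_{\alpha+r}(l;m)DM_{\alpha+s}(l;m)/DM_\alpha(l;m)$. $\chi^{H,\alpha}_m(r,s)=\sum_{|l|=m}\frac{1}{DM_\alpha(l;m)}\frac{\binom{m}{l}p_l(r)}{N_{[m]}}\frac{\binom{m}{l}p_l(s)}{N_{[m]}}$ with $p_l(r)=\prod_i(r_i)_{[l_i]}$. $a^{\theta}_{nm}=(\theta+2n-1)(-1)^{n-m}\frac{(\theta+m)_{(n-1)}}{m!(n-m)!}$ for $0\le m\le n$ (with $a^\theta_{00}=1$). *)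

(* Parameters alpha_i live in an arbitrary real field R
   (covers the real numbers; the identity is purely algebraic). *)
From HB Require Import structures.
From mathcomp Require Import all_boot all_order all_algebra.
Set Implicit Arguments. Unset Strict Implicit. Unset Printing Implicit Defensive.
Import Order.TTheory GRing.Theory Num.Theory.
Local Open Scope ring_scope.

Section Defs.
Variable R : realFieldType.
Variable d : nat.

Definition rising (c : R) (k : nat) : R := \prod_(i < k) (c + i%:R).

(* compositions l in Z_+^d with |l| = M, encoded as finite functions into 'I_(M+1) *)
Definition is_comp (M : nat) (l : {ffun 'I_d -> 'I_M.+1}) : bool :=
  (\sum_(i < d) (l i : nat))%N == M.

Definition multinom (M : nat) (l : 'I_d -> nat) : R :=
  (M`!)%:R / \prod_(i < d) ((l i)`!)%:R.

Definition DM (beta : 'I_d -> R) (M : nat) (l : 'I_d -> nat) : R :=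
  multinom M l * (\prod_(i < d) rising (beta i) (l i)) / rising (\sum_(i < d) beta i) M.

Definition pl (l r : 'I_d -> nat) : R := \prod_(i < d) ((r i) ^_ (l i))%:R.

Definition shift (alpha : 'I_d -> R) (r : 'I_d -> nat) : 'I_d -> R :=
  fun i => alpha i + (r i)%:R.

Definition xiH (alpha : 'I_d -> R) (m : nat) (r s : 'I_d -> nat) : R :=
  \sum_(l : {ffun 'I_d -> 'I_m.+1} | is_comp l)
     DM (shift alpha r) m (fun i => l i) * DM (shift alpha s) m (fun i => l i)
     / DM alpha m (fun i => l i).

Definition chiH (alpha : 'I_d -> R) (N m : nat) (r s : 'I_d -> nat) : R :=
  \sum_(l : {ffun 'I_d -> 'I_m.+1} | is_comp l)
     (DM alpha m (fun i => l i))^-1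
     * (multinom m (fun i => l i) * pl (fun i => l i) r / (N ^_ m)%:R)
     * (multinom m (fun i => l i) * pl (fun i => l i) s / (N ^_ m)%:R).

Definition acoef (theta : R) (n m : nat) : R :=
  if n is 0 then 1 else
  (theta + (2 * n)%:R - 1) * (-1) ^+ (n - m) * rising (theta + m%:R) (n - 1)
    / ((m`!)%:R * ((n - m)`!)%:R).

Definition bcoef (alpha : 'I_d -> R) (N m l : nat) : R :=
  let a := \sum_(i < d) alpha i in
  \sum_(l <= n < m.+1)
     ((N ^_ n)%:R / rising (a + N%:R) n) ^+ 2
     * ((m ^_ n)%:R / rising (a + m%:R) n) * acoef a n l.

End Defs.

(* Write th = |alpha|.  Up to explicit factors, xi_m and chi_J are the coefficients of X^m
   and X^J in the products over i of the truncated hypergeometric series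
     Phi_i = 2F1(alpha_i + r_i, alpha_i + s_i; alpha_i; X),
     Psi_i = 2F1(-r_i, -s_i; alpha_i; X).
   Euler's transformation Phi_i = (1 - X)^-(alpha_i + r_i + s_i) Psi_i (coefficientwise, the
   Pfaff-Saalschutz identity) and Chu-Vandermonde give prod Phi_i = (1 - X)^-(th + 2N) prod Psi_i,
   so xi_m = sum_J beta_mJ chi_J for an explicit product beta_mJ ([bclosed]).  It remains to
   see beta = b.  With c_kj = k_[j] / (th + k)_(j), the triangular matrix (a^th_nk) is inverse
   to (c_kj) (an alternating binomial sum of a polynomial of low degree vanishes), while a
   second Pfaff-Saalschutz summation gives beta c = rho, where b = rho a; hence
   b = rho a = beta c a = beta. *)

From HB Require Import structures.
From mathcomp Require Import all_boot all_order all_algebra.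
From mathcomp Require Import ring.
Import Order.TTheory GRing.Theory Num.Theory.
Set Implicit Arguments. Unset Strict Implicit. Unset Printing Implicit Defensive.
Local Open Scope ring_scope.

Lemma ffactD n j t : (n ^_ (j + t) = n ^_ j * (n - j) ^_ t)%N.
Proof.
elim: t => [|t IH]; first by rewrite addn0 ffactn0 muln1.
by rewrite addnS !ffactnSr IH subnDA mulnA.
Qed.

Section RisingFactorial.
Variable R : realFieldType.
Implicit Types (a c x y : R) (j k n : nat).

Lemma rising0 c : rising c 0 = 1.
Proof. by rewrite /rising big_ord0. Qed.

Lemma risingS c k : rising c k.+1 = rising c k * (c + k%:R).
Proof. by rewrite /rising big_ord_recr. Qed.

Lemma risingSl c k : rising c k.+1 = c * rising (c + 1) k.
Proof.
rewrite /rising big_ord_recl addr0; congr (_ * _); apply: eq_bigr => i _.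
by rewrite /= /bump /=; ring.
Qed.

Lemma risingSl_nat c n k : rising (c + n%:R) k.+1 = (c + n%:R) * rising (c + n.+1%:R) k.
Proof. by rewrite risingSl -natr1 addrA. Qed.

Lemma risingD c j n : rising c (j + n) = rising c j * rising (c + j%:R) n.
Proof.
elim: n => [|n IH]; first by rewrite addn0 rising0 mulr1.
by rewrite addnS !risingS IH natrD addrA mulrA.
Qed.

Lemma rising_gt0 c k : 0 < c -> 0 < rising c k.
Proof. by move=> c_gt0; apply: prodr_gt0 => i _; apply: ltr_wpDr. Qed.

Lemma rising_neq0 c k : 0 < c -> rising c k != 0.
Proof. by move=> c_gt0; rewrite lt0r_neq0 ?rising_gt0. Qed.

Lemma rising_shift_neq0 c n k : 0 < c -> rising (c + n%:R) k != 0.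
Proof. by move=> c_gt0; rewrite rising_neq0 ?ltr_wpDr. Qed.

Lemma fact_neq0 n : n`!%:R != 0 :> R.
Proof. by rewrite pnatr_eq0 -lt0n fact_gt0. Qed.

Lemma natr_ffact_neq0 n m : (m <= n)%N -> (n ^_ m)%:R != 0 :> R.
Proof. by move=> lemn; rewrite pnatr_eq0 -lt0n ffact_gt0. Qed.

Lemma natr_bin_neq0 n m : (m <= n)%N -> 'C(n, m)%:R != 0 :> R.
Proof. by move=> lemn; rewrite pnatr_eq0 -lt0n bin_gt0. Qed.

Lemma natr_ffactSr n m : (m <= n)%N -> (n ^_ m.+1)%:R = (n ^_ m)%:R * (n%:R - m%:R) :> R.
Proof. by move=> lemn; rewrite ffactnSr natrM natrB. Qed.

Lemma sum_eq_by_telescoping n (f g G : nat -> R) c :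
  (forall j, (j <= n.+1)%N -> f j - c * g j = G j.+1 - G j) ->
  g n.+1 = 0 -> G 0 = 0 -> G n.+2 = 0 ->
  \sum_(j < n.+2) f j = c * \sum_(j < n.+1) g j.
Proof.
move=> fgG gn G0 Gn.
have <- : \sum_(j < n.+2) g j = \sum_(j < n.+1) g j by rewrite big_ord_recr /= gn addr0.
apply/eqP; rewrite -subr_eq0 mulr_sumr -sumrB.
rewrite (eq_bigr (fun j : 'I_n.+2 => G j.+1 - G j)) => [|j _]; last by rewrite fgG // -ltnS.
by rewrite -(big_mkord xpredT (fun j => G j.+1 - G j)) telescope_sumr // Gn G0 subrr.
Qed.

Lemma rising_vandermonde x y n :
  rising (x + y) n = \sum_(j < n.+1) 'C(n, j)%:R * rising x j * rising y (n - j).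
Proof.
elim: n => [|n IH]; first by rewrite big_ord1 !rising0 bin0 !mulr1.
pose T n j := 'C(n, j)%:R * rising x j * rising y (n - j).
pose G j := if j is i.+1 then - ('C(n, i)%:R * rising x j * rising y (n - i)) else 0.
rewrite risingS IH mulrC; symmetry.
apply: (sum_eq_by_telescoping (f := T n.+1) (g := T n) (G := G)) => [j lejn||//|].
- rewrite /T /G; case: j lejn => [|j] lejn.
    by rewrite !bin0 !subn0 !risingS !rising0; ring.
  case: (ltngtP j n) => [ltjn|ltnj|->].
  + have [t ->] : exists t, n = (j.+1 + t)%N by exists (n - j.+1)%N; rewrite subnKC.
    rewrite subSn ?leq_addr // !addKn addSn subSn ?leq_addr // addKn.
    by rewrite binS natrD !risingS; ring.
  + by move: lejn; rewrite ltnS leqNgt ltnj.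
  + by rewrite !subnn !(bin_small (ltnSn n)) !binn !rising0; ring.
- by rewrite /T bin_small ?mul0r.
- by rewrite /G bin_small ?mul0r ?oppr0.
Qed.

Lemma rising_pfaff_saalschutz a r s k :
  rising (a + r%:R) k * rising (a + s%:R) k =
  \sum_(j < k.+1) 'C(k, j)%:R * (r ^_ j)%:R * (s ^_ j)%:R
                  * rising (a + j%:R) (k - j) * rising (a + r%:R + s%:R) (k - j).
Proof.
elim: k => [|k IH]; first by rewrite big_ord1 !rising0 bin0 !ffactn0 !mulr1.
pose T k j := 'C(k, j)%:R * (r ^_ j)%:R * (s ^_ j)%:R
              * rising (a + j%:R) (k - j) * rising (a + r%:R + s%:R) (k - j).
pose G j := if j is i.+1 then
  - ('C(k, i)%:R * (r ^_ j)%:R * (s ^_ j)%:R * rising (a + i%:R) (k - i)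
     * rising (a + r%:R + s%:R) (k - i)) else 0.
rewrite !risingS mulrACA IH mulrC; symmetry.
apply: (sum_eq_by_telescoping (f := T k.+1) (g := T k) (G := G)) => [j lejk||//|].
- rewrite /T /G; case: j lejk => [|j] lejk.
    by rewrite !bin0 !ffactn0 !ffactn1 !subn0 !addr0 !risingS; ring.
  case: (ltngtP j k) => [ltjk|ltkj|->].
  + have [t ->] : exists t, k = (j.+1 + t)%N by exists (k - j.+1)%N; rewrite subnKC.
    have e1 : ((j.+1 + t).+1 - j.+1 = t.+1)%N by rewrite -addnS addKn.
    have e2 : (j.+1 + t - j.+1 = t)%N by rewrite addKn.
    have e3 : (j.+1 + t - j = t.+1)%N by rewrite addSnnS addKn.
    have binP : 'C(j.+1 + t, j.+1)%:R * j.+1%:R = 'C(j.+1 + t, j)%:R * t.+1%:R :> R.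
      by rewrite -!natrM mulnC mul_bin_left e3 mulnC.
    rewrite e1 e2 e3 binS natrD [rising (a + j%:R) _]risingSl_nat !risingS.
    have [ltrj|lejr] := ltnP r j.+1.
      by rewrite (ffact_small ltrj) (ffact_small (leqW ltrj)); ring.
    have [ltsj|lejs] := ltnP s j.+1.
      by rewrite (ffact_small ltsj) (ffact_small (leqW ltsj)); ring.
    rewrite (natr_ffactSr lejr) (natr_ffactSr lejs).
    apply/eqP; rewrite -subr_eq0; apply/eqP.
    transitivity ((a + r%:R + s%:R + t%:R) * (r ^_ j.+1)%:R * (s ^_ j.+1)%:R
                  * rising (a + j.+1%:R) t * rising (a + r%:R + s%:R) t
                  * ('C(j.+1 + t, j)%:R * t.+1%:R - 'C(j.+1 + t, j.+1)%:R * j.+1%:R)).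
      by ring.
    by rewrite binP subrr mulr0.
  + by move: lejk; rewrite ltnS leqNgt ltkj.
  + by rewrite !subnn !(bin_small (ltnSn k)) !binn !rising0; ring.
- by rewrite /T bin_small ?mul0r.
- by rewrite /G bin_small ?mul0r ?oppr0.
Qed.

Lemma sum_ord_vanishing_prefix (F : nat -> R) j n :
  (forall k, (k < j)%N -> F k = 0) ->
  \sum_(k < (j + n).+1) F k = \sum_(t < n.+1) F (t + j)%N.
Proof.
move=> F0; rewrite -!(big_mkord xpredT) (big_cat_nat (leq0n j)) ?leqW ?leq_addr //=.
rewrite big1_seq ?add0r => [|k /andP[_]]; last by rewrite mem_index_iota => /andP[_ /F0].
by rewrite -{1}(add0n j) big_addn -addnS addKn big_mkord.
Qed.

Definition rising_fdiff L x K : R :=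
  \sum_(j < L.+1) (-1) ^+ j * 'C(L, j)%:R * rising (x + j%:R) K.

Lemma rising_fdiffS L x K :
  rising_fdiff L.+1 x K = rising_fdiff L x K - rising_fdiff L (x + 1) K.
Proof.
rewrite /rising_fdiff big_ord_recl [in X in _ = X - _]big_ord_recl /=.
rewrite [\sum_(i < L.+1) _](eq_bigr (fun i : 'I_L.+1 =>
   (-1) ^+ i.+1 * 'C(L, i.+1)%:R * rising (x + i.+1%:R) K
   - (-1) ^+ i * 'C(L, i)%:R * rising (x + 1 + i%:R) K)) => [|i _]; last first.
  by rewrite /bump /= add1n binS natrD exprS -natr1 addrAC -addrA; ring.
rewrite sumrB big_ord_recr /= (bin_small (ltnSn L)) mulr0 mul0r addr0 addrA !bin0.
congr (_ + _ - _); rewrite addr0; apply: eq_bigr => i _.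
by rewrite /bump /= add1n.
Qed.

Lemma rising_fdiff_succ L x K :
  rising_fdiff L x K.+1 - rising_fdiff L (x + 1) K.+1 = - K.+1%:R * rising_fdiff L (x + 1) K.
Proof.
rewrite /rising_fdiff -sumrB mulr_sumr; apply: eq_bigr => j _.
by rewrite risingSl addrAC !risingS; ring.
Qed.

Lemma rising_fdiff_eq0 L x K : (K < L)%N -> rising_fdiff L x K = 0.
Proof.
elim: L x K => [//|L IH] x [|K] ltKL; rewrite rising_fdiffS.
  by rewrite /rising_fdiff -sumrB big1 // => j _; rewrite !rising0 subrr.
by rewrite rising_fdiff_succ IH ?mulr0 // ltnW.
Qed.

End RisingFactorial.

Section InverseRelation.
Variables (R : realFieldType) (th : R).
Hypothesis th_gt0 : 0 < th.

Definition ccoef (k j : nat) : R := (k ^_ j)%:R / rising (th + k%:R) j.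

Lemma ccoef_small k j : (k < j)%N -> ccoef k j = 0.
Proof. by move=> ltkj; rewrite /ccoef ffact_small // mul0r. Qed.

Lemma natr_double n : (2 * n)%:R = n%:R + n%:R :> R.
Proof. by rewrite mul2n -addnn natrD. Qed.

Lemma acoef_ccoef_diag i : acoef th i i * ccoef i i = 1.
Proof.
rewrite /acoef /ccoef; case: i => [|i]; first by rewrite ffactn0 rising0 mul1r divr1.
rewrite subnn subn1 /= expr0 mulr1 ffactnn fact0 mulr1 risingS natr_double -natr1.
have nz1 : rising (th + (i%:R + 1)) i != 0 by rewrite natr1 rising_shift_neq0.
have nz2 : th + (i%:R + 1) + i%:R != 0.
  by apply: lt0r_neq0; rewrite ltr_wpDr // ltr_wpDr // addr_ge0.
have nz3 := fact_neq0 R i.+1.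
by field; rewrite ?nz1 ?nz2 ?nz3.
Qed.

Lemma acoef_ccoef_offdiag j L t : (t <= L.+1)%N ->
  acoef th (j + L.+1) (t + j) * ccoef (t + j) j =
  (th + (2 * (j + L.+1))%:R - 1) / (L.+1)`!%:R * (-1) ^+ L.+1
  * ((-1) ^+ t * 'C(L.+1, t)%:R * rising (th + (2 * j)%:R + t%:R) L).
Proof.
move=> letL; rewrite addnS /acoef /ccoef subn1 /=.
have -> : ((j + L).+1 - (t + j) = L.+1 - t)%N by rewrite -addnS addnC subnDr.
have -> : (-1) ^+ (L.+1 - t) = (-1) ^+ L.+1 * (-1) ^+ t :> R.
  by rewrite -[in RHS](subnK letL) exprD -mulrA -expr2 sqrr_sign mulr1.
rewrite risingD.
have -> : th + (t + j)%:R + j%:R = th + (2 * j)%:R + t%:R by rewrite natr_double !natrD; ring.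
have -> : ((t + j)`! = (t + j) ^_ j * t`!)%N by rewrite -(ffact_fact (leq_addl t j)) addnK.
rewrite -(bin_fact letL) !natrM.
have nz1 : rising (th + (t + j)%:R) j != 0 by rewrite rising_shift_neq0.
have nz2 := natr_ffact_neq0 R (leq_addl t j).
have nz3 := fact_neq0 R t.
have nz4 := fact_neq0 R (L.+1 - t).
have nz5 := natr_bin_neq0 R letL.
by field; rewrite ?nz1 ?nz2 ?nz3 ?nz4 ?nz5.
Qed.

Lemma sum_acoef_ccoef i j : \sum_(k < i.+1) acoef th i k * ccoef k j = (i == j)%:R.
Proof.
case: (ltngtP i j) => [ltij|ltji|<-].
- by rewrite big1 // => k _; rewrite ccoef_small ?mulr0 // (leq_ltn_trans (leq_ord k)).
- have [L ->] : exists L, i = (j + L.+1)%N by exists (i - j.+1)%N; rewrite addnS -addSn subnKC.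
  rewrite (sum_ord_vanishing_prefix (F := fun k => acoef th _ k * ccoef k j)); last first.
    by move=> k ltkj; rewrite ccoef_small ?mulr0.
  rewrite (eq_bigr _ (fun t _ => acoef_ccoef_offdiag _ (leq_ord t))) -mulr_sumr.
  by rewrite -/(rising_fdiff L.+1 (th + (2 * j)%:R) L) rising_fdiff_eq0 ?mulr0.
- rewrite big_ord_recr /= acoef_ccoef_diag big1 ?add0r // => k _.
  by rewrite ccoef_small ?mulr0.
Qed.

Definition rho (N i n : nat) : R := ((N ^_ n)%:R / rising (th + N%:R) n) ^+ 2 * ccoef i n.

Definition bclosed (N i l : nat) : R :=
  i`!%:R * rising th i / rising (th + N%:R) i ^+ 2
  * rising (th + N%:R + N%:R) (i - l) / (i - l)`!%:R
  * (N ^_ l)%:R ^+ 2 / (l`!%:R * rising th l).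

Lemma bclosed_ccoef_shift N j n t : (j + n <= N)%N -> (t <= n)%N ->
  bclosed N (j + n) (t + j) * ccoef (t + j) j =
  (j + n)`!%:R * rising th (j + n) / rising (th + N%:R) (j + n) ^+ 2
  * (N ^_ j)%:R ^+ 2 / (rising th (j + j) * rising (th + (j + j)%:R) n * n`!%:R)
  * ('C(n, t)%:R * ((N - j) ^_ t)%:R * ((N - j) ^_ t)%:R
     * rising (th + (j + j)%:R + t%:R) (n - t)
     * rising (th + (j + j)%:R + (N - j)%:R + (N - j)%:R) (n - t)).
Proof.
move=> lejnN letn.
have lejN : (j <= N)%N by apply: leq_trans lejnN; apply: leq_addr.
rewrite /bclosed /ccoef.
have -> : (j + n - (t + j) = n - t)%N by rewrite [(t + j)%N]addnC subnDl.
have -> : th + (j + j)%:R + (N - j)%:R + (N - j)%:R = th + N%:R + N%:R.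
  by rewrite natrD !(natrB _ lejN); ring.
rewrite [in N ^_ (t + j)]addnC ffactD.
have -> : ((t + j)`! = (t + j) ^_ j * t`!)%N.
  by rewrite -(ffact_fact (leq_addl t j)) addnK.
have nzU : rising (th + (t + j)%:R) j != 0 by rewrite rising_shift_neq0.
have -> : rising th (t + j) = rising th (j + j) * rising (th + (j + j)%:R) t
                              / rising (th + (t + j)%:R) j.
  by apply: (mulIf nzU); rewrite divfK // -!risingD [(t + j)%N]addnC addnAC.
have -> : rising (th + (j + j)%:R) n
          = rising (th + (j + j)%:R) t * rising (th + (j + j)%:R + t%:R) (n - t).
  by rewrite -risingD subnKC.
rewrite -(bin_fact letn) !natrM.
have nzP : rising th (j + j) != 0 by rewrite rising_neq0.
have nzQ : rising (th + (j + j)%:R) t != 0 by rewrite rising_shift_neq0.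
have nzV : rising (th + (j + j)%:R + t%:R) (n - t) != 0.
  by rewrite -addrA -natrD rising_shift_neq0.
have nzI : rising (th + N%:R) (j + n) != 0 by rewrite rising_shift_neq0.
have nz1 := fact_neq0 R t.
have nz2 := fact_neq0 R (n - t).
have nz3 := natr_ffact_neq0 R (leq_addl t j).
have nz4 := natr_bin_neq0 R letn.
by field; rewrite ?nzU ?nzP ?nzQ ?nzV ?nzI ?nz1 ?nz2 ?nz3 ?nz4.
Qed.

Lemma rhoE_shift N j n : (j + n <= N)%N ->
  (j + n)`!%:R * rising th (j + n) / rising (th + N%:R) (j + n) ^+ 2
  * (N ^_ j)%:R ^+ 2 / (rising th (j + j) * rising (th + (j + j)%:R) n * n`!%:R)
  * (rising (th + (j + j)%:R + (N - j)%:R) n * rising (th + (j + j)%:R + (N - j)%:R) n)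
  = rho N (j + n) j.
Proof.
move=> lejnN; have lejN : (j <= N)%N by apply: leq_trans lejnN; apply: leq_addr.
have -> : th + (j + j)%:R + (N - j)%:R = th + N%:R + j%:R.
  by rewrite natrD (natrB _ lejN); ring.
rewrite /rho /ccoef [rising (th + N%:R) (j + n)]risingD.
have -> : ((j + n)`! = (j + n) ^_ j * n`!)%N by rewrite -(ffact_fact (leq_addr n j)) addKn.
have nzU : rising (th + (j + n)%:R) j != 0 by rewrite rising_shift_neq0.
have -> : rising th (j + n) = rising th (j + j) * rising (th + (j + j)%:R) n
                              / rising (th + (j + n)%:R) j.
  by apply: (mulIf nzU); rewrite divfK // -!risingD addnAC.
have nzP : rising th (j + j) != 0 by rewrite rising_neq0.
have nzQ : rising (th + (j + j)%:R) n != 0 by rewrite rising_shift_neq0.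
have nzA : rising (th + N%:R) j != 0 by rewrite rising_shift_neq0.
have nzB : rising (th + N%:R + j%:R) n != 0 by rewrite -addrA -natrD rising_shift_neq0.
have nz1 := fact_neq0 R n.
have nz2 := natr_ffact_neq0 R (leq_addr n j).
by rewrite natrM; field; rewrite ?nzU ?nzP ?nzQ ?nzA ?nzB ?nz1 ?nz2.
Qed.

Lemma sum_bclosed_ccoef N i j : (i <= N)%N ->
  \sum_(l < i.+1) bclosed N i l * ccoef l j = rho N i j.
Proof.
move=> leiN; have [ltij|leji] := ltnP i j.
  rewrite /rho ccoef_small // mulr0 big1 // => l _.
  by rewrite ccoef_small ?mulr0 // (leq_ltn_trans (leq_ord l)).
have [n defi] : exists n, i = (j + n)%N by exists (i - j)%N; rewrite subnKC.
rewrite defi in leiN *.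
rewrite (sum_ord_vanishing_prefix (F := fun l => bclosed N _ l * ccoef l j)); last first.
  by move=> l ltlj; rewrite ccoef_small ?mulr0.
rewrite (eq_bigr _ (fun t _ => bclosed_ccoef_shift leiN (leq_ord t))) -mulr_sumr.
by rewrite -rising_pfaff_saalschutz rhoE_shift.
Qed.

Lemma sum_rho_acoef N m l : (l <= m)%N -> (m <= N)%N ->
  \sum_(l <= n < m.+1) rho N m n * acoef th n l = bclosed N m l.
Proof.
move=> lelm lemN.
pose lowtri (f : nat -> nat -> R) :=
  \matrix_(i < m.+1, k < m.+1) (if (k <= i)%N then f i k else 0).
pose C := \matrix_(k < m.+1, j < m.+1) ccoef k j.
have lowtriE f (i k : 'I_m.+1) : lowtri f i k = if (k <= i)%N then f i k else 0 by rewrite mxE.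
have mul_lowtri f (i j : 'I_m.+1) : (lowtri f *m C) i j = \sum_(k < i.+1) f i k * ccoef k j.
  rewrite mxE (big_ord_widen m.+1 (fun k => f i k * ccoef k j) (ltn_ord i)).
  rewrite [RHS]big_mkcond; apply: eq_bigr => k _.
  by rewrite lowtriE mxE ltnS; case: leqP; rewrite ?mul0r.
have AC : lowtri (acoef th) *m C = 1%:M.
  by apply/matrixP => i j; rewrite mul_lowtri sum_acoef_ccoef // mxE.
have BC : lowtri (bclosed N) *m C = \matrix_(i < m.+1, j < m.+1) rho N i j.
  apply/matrixP => i j; rewrite mul_lowtri sum_bclosed_ccoef ?mxE //.
  exact: leq_trans (leq_ord i) lemN.
have RA : (\matrix_(i < m.+1, j < m.+1) rho N i j) *m lowtri (acoef th) = lowtri (bclosed N).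
  by rewrite -BC -mulmxA (mulmx1C AC) mulmx1.
have := congr1 (fun X : 'M[R]_m.+1 => X ord_max (inord l)) RA.
rewrite lowtriE inordK ?ltnS // lelm mxE => <-.
rewrite big_geq_mkord big_mkcond; apply: eq_bigr => n _.
by rewrite !mxE inordK ?ltnS //=; case: leqP; rewrite ?mulr0.
Qed.

Lemma bclosed_weight N m J : (J <= N)%N ->
  bclosed N m J * (J`!%:R * rising th J / (N ^_ J)%:R ^+ 2) =
  m`!%:R * rising th m / rising (th + N%:R) m ^+ 2
  * (rising (th + N%:R + N%:R) (m - J) / (m - J)`!%:R).
Proof.
move=> leJN; rewrite /bclosed.
have nz1 : rising th J != 0 by rewrite rising_neq0.
have nz2 := natr_ffact_neq0 R leJN.
have nz3 := fact_neq0 R J.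
have nz4 := fact_neq0 R (m - J).
have nz5 : rising (th + N%:R) m != 0 by rewrite rising_shift_neq0.
by field; rewrite ?nz1 ?nz2 ?nz3 ?nz4 ?nz5.
Qed.

End InverseRelation.

Section TruncatedSeries.
Variable R : realFieldType.
Implicit Types (p q : {poly R}) (a c : R) (n m r s : nat).

Definition agree_upto n p q := forall k, (k <= n)%N -> p`_k = q`_k.

Lemma agree_upto_trans n p1 p2 p3 :
  agree_upto n p1 p2 -> agree_upto n p2 p3 -> agree_upto n p1 p3.
Proof. by move=> p12 p23 k lekn; rewrite p12 // p23. Qed.

Lemma agree_uptoM n p1 p2 q1 q2 :
  agree_upto n p1 q1 -> agree_upto n p2 q2 -> agree_upto n (p1 * p2) (q1 * q2).
Proof.
move=> pq1 pq2 k lekn; rewrite !coefM; apply: eq_bigr => j _.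
by rewrite pq1 ?pq2 // (leq_trans _ lekn) ?leq_subr // -ltnS.
Qed.

Lemma agree_upto_prod n I (t : seq I) (P : pred I) (F G : I -> {poly R}) :
  (forall i, P i -> agree_upto n (F i) (G i)) ->
  agree_upto n (\prod_(i <- t | P i) F i) (\prod_(i <- t | P i) G i).
Proof. by move=> FG; apply: (big_ind2 (agree_upto n)) => // *; apply: agree_uptoM. Qed.

Definition rising_series m c : {poly R} := \poly_(k < m.+1) (rising c k / k`!%:R).

Lemma rising_seriesD m c1 c2 :
  agree_upto m (rising_series m c1 * rising_series m c2) (rising_series m (c1 + c2)).
Proof.
move=> k lekm; rewrite coefM coef_poly ltnS lekm rising_vandermonde mulr_suml.
apply: eq_bigr => j _; have lejk : (j <= k)%N by rewrite -ltnS.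
rewrite !coef_poly ltnS (leq_trans lejk lekm) ltnS (leq_trans (leq_subr j k) lekm).
rewrite -(bin_fact lejk) !natrM.
have nz1 := fact_neq0 R j; have nz2 := fact_neq0 R (k - j).
have nz3 := natr_bin_neq0 R lejk.
by field; rewrite ?nz1 ?nz2 ?nz3.
Qed.

Lemma rising_series_prod m I (t : seq I) (P : pred I) (c : I -> R) :
  agree_upto m (\prod_(i <- t | P i) rising_series m (c i))
               (rising_series m (\sum_(i <- t | P i) c i)).
Proof.
apply: (big_ind2 (fun p x => agree_upto m p (rising_series m x))) => [k lekm||//].
  rewrite coef1 coef_poly ltnS lekm.
  by case: k {lekm} => [|k]; rewrite ?rising0 ?fact0 ?divr1 // risingSl !mul0r.
move=> p1 c1 p2 c2 pc1 pc2.
exact: agree_upto_trans (agree_uptoM pc1 pc2) (rising_seriesD _ _).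
Qed.

Definition xi_series m a r s : {poly R} :=
  \poly_(k < m.+1) (rising (a + r%:R) k * rising (a + s%:R) k / rising a k / k`!%:R).

Definition chi_series m a r s : {poly R} :=
  \poly_(k < m.+1) ((r ^_ k)%:R * (s ^_ k)%:R / rising a k / k`!%:R).

Lemma euler_transformation m a r s : 0 < a ->
  agree_upto m (xi_series m a r s) (chi_series m a r s * rising_series m (a + r%:R + s%:R)).
Proof.
move=> a_gt0 k lekm; rewrite coefM coef_poly ltnS lekm rising_pfaff_saalschutz !mulr_suml.
apply: eq_bigr => j _; have lejk : (j <= k)%N by rewrite -ltnS.
rewrite !coef_poly ltnS (leq_trans lejk lekm) ltnS (leq_trans (leq_subr j k) lekm).
have -> : rising a k = rising a j * rising (a + j%:R) (k - j) by rewrite -risingD subnKC.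
rewrite -(bin_fact lejk) !natrM.
have nz1 := fact_neq0 R j; have nz2 := fact_neq0 R (k - j).
have nz3 := natr_bin_neq0 R lejk.
have nz4 : rising a j != 0 by rewrite rising_neq0.
have nz5 : rising (a + j%:R) (k - j) != 0 by rewrite rising_shift_neq0.
by field; rewrite ?nz1 ?nz2 ?nz3 ?nz4 ?nz5.
Qed.

Lemma chi_series_trunc m J a r s : (J <= m)%N ->
  agree_upto J (chi_series m a r s) (chi_series J a r s).
Proof. by move=> leJm k lekJ; rewrite !coef_poly !ltnS lekJ (leq_trans lekJ leJm). Qed.

End TruncatedSeries.

Section CompositionSums.
Variables (R : realFieldType) (d : nat).
Implicit Types (alpha : 'I_d -> R) (r s : 'I_d -> nat).

Lemma coef_prod_poly_comp m (f : 'I_d -> nat -> R) :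
  (\prod_(i < d) \poly_(k < m.+1) f i k)`_m =
  \sum_(l : {ffun 'I_d -> 'I_m.+1} | is_comp l) \prod_(i < d) f i (l i).
Proof.
rewrite (eq_bigr (fun i => \sum_(k < m.+1) (f i k)%:P * 'X^k)) => [|i _]; last first.
  by rewrite poly_def; apply: eq_bigr => k _; rewrite mul_polyC.
rewrite bigA_distr_bigA coef_sum [RHS]big_mkcond /=; apply: eq_bigr => l _.
rewrite big_split /= -rmorph_prod prodrXr coefCM coefXn /is_comp eq_sym.
by case: ifP; rewrite ?mulr1 ?mulr0.
Qed.

Lemma psumr_gt0 alpha : (0 < d)%N -> (forall i, 0 < alpha i) -> 0 < \sum_(i < d) alpha i.
Proof.
move=> d_gt0 alpha_gt0; rewrite (bigD1 (Ordinal d_gt0)) //= ltr_wpDr //.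
by apply: sumr_ge0 => i _; apply: ltW.
Qed.

Lemma xiH_coef alpha N m r s : (0 < d)%N -> (forall i, 0 < alpha i) ->
  (\sum_(i < d) r i)%N = N -> (\sum_(i < d) s i)%N = N ->
  xiH alpha m r s = m`!%:R * rising (\sum_(i < d) alpha i) m
     / rising (\sum_(i < d) alpha i + N%:R) m ^+ 2
     * (\prod_(i < d) xi_series m (alpha i) (r i) (s i))`_m.
Proof.
move=> d_gt0 alpha_gt0 sum_r sum_s; have th_gt0 := psumr_gt0 d_gt0 alpha_gt0.
have sum_shift t :
    (\sum_(i < d) t i)%N = N -> \sum_(i < d) shift alpha t i = \sum_(i < d) alpha i + N%:R.
  by move=> sum_t; rewrite /shift big_split /= -natr_sum sum_t.
rewrite coef_prod_poly_comp /xiH mulr_sumr; apply: eq_bigr => l _.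
rewrite /DM (sum_shift _ sum_r) (sum_shift _ sum_s) /multinom /shift !prodf_div !big_split /=.
have nz1 : \prod_(i < d) rising (alpha i) (l i) != 0.
  by apply/prodf_neq0 => i _; rewrite rising_neq0.
have nz2 : \prod_(i < d) (l i)`!%:R != 0 :> R by apply/prodf_neq0 => i _; rewrite fact_neq0.
have nz3 : rising (\sum_(i < d) alpha i) m != 0 by rewrite rising_neq0.
have nz4 : rising (\sum_(i < d) alpha i + N%:R) m != 0 by rewrite rising_shift_neq0.
have nz5 := fact_neq0 R m.
by field; rewrite ?nz1 ?nz2 ?nz3 ?nz4 ?nz5.
Qed.

Lemma chiH_coef alpha N J r s : (0 < d)%N -> (forall i, 0 < alpha i) -> (J <= N)%N ->
  chiH alpha N J r s = J`!%:R * rising (\sum_(i < d) alpha i) J / (N ^_ J)%:R ^+ 2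
     * (\prod_(i < d) chi_series J (alpha i) (r i) (s i))`_J.
Proof.
move=> d_gt0 alpha_gt0 leJN; have th_gt0 := psumr_gt0 d_gt0 alpha_gt0.
rewrite coef_prod_poly_comp /chiH mulr_sumr; apply: eq_bigr => l _.
rewrite /DM /multinom /pl !prodf_div !big_split /=.
have nz1 : \prod_(i < d) rising (alpha i) (l i) != 0.
  by apply/prodf_neq0 => i _; rewrite rising_neq0.
have nz2 : \prod_(i < d) (l i)`!%:R != 0 :> R by apply/prodf_neq0 => i _; rewrite fact_neq0.
have nz3 : rising (\sum_(i < d) alpha i) J != 0 by rewrite rising_neq0.
have nz4 := natr_ffact_neq0 R leJN.
have nz5 := fact_neq0 R J.
by field; rewrite ?nz1 ?nz2 ?nz3 ?nz4 ?nz5.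
Qed.

Lemma coef_prod_xi_series alpha N m r s : (forall i, 0 < alpha i) ->
  (\sum_(i < d) r i)%N = N -> (\sum_(i < d) s i)%N = N ->
  (\prod_(i < d) xi_series m (alpha i) (r i) (s i))`_m =
  \sum_(J < m.+1) rising (\sum_(i < d) alpha i + N%:R + N%:R) (m - J) / (m - J)`!%:R
                  * (\prod_(i < d) chi_series J (alpha i) (r i) (s i))`_J.
Proof.
move=> alpha_gt0 sum_r sum_s.
have -> : \sum_(i < d) alpha i + N%:R + N%:R = \sum_(i < d) (alpha i + (r i)%:R + (s i)%:R).
  by rewrite !big_split /= -!natr_sum sum_r sum_s.
have euler_prod := agree_upto_prod (index_enum 'I_d) (fun i (_ : true) =>
  @euler_transformation _ m _ (r i) (s i) (alpha_gt0 i)).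
rewrite euler_prod // big_split /=.
rewrite (@agree_uptoM _ m _ _ _ _ (fun k _ => erefl) (@rising_series_prod _ m _ _ _ _)) //.
rewrite coefM; apply: eq_bigr => J _; have leJm : (J <= m)%N by rewrite -ltnS.
rewrite coef_poly ltnS leq_subr mulrC.
by rewrite (agree_upto_prod _ (fun i _ => @chi_series_trunc _ m J _ (r i) (s i) leJm)).
Qed.

End CompositionSums.

Theorem corollary3p5 (R : realFieldType) (d : nat) (hd : (2 <= d)%N)
  (alpha : 'I_d -> R) (halpha : forall i, 0 < alpha i)
  (N m : nat) (hm : (m <= N)%N)
  (r s : 'I_d -> nat)
  (hr : (\sum_(i < d) r i)%N = N) (hs : (\sum_(i < d) s i)%N = N) :
  xiH alpha m r s = \sum_(l < m.+1) bcoef alpha N m l * chiH alpha N l r s.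
Proof.
have d_gt0 : (0 < d)%N by apply: leq_trans hd.
have th_gt0 := psumr_gt0 d_gt0 halpha.
rewrite (xiH_coef m d_gt0 halpha hr hs) (coef_prod_xi_series m halpha hr hs) mulr_sumr.
apply: eq_bigr => J _; have leJm : (J <= m)%N by rewrite -ltnS.
have leJN := leq_trans leJm hm.
rewrite (chiH_coef _ _ d_gt0 halpha leJN) mulrA.
(* [bcoef] unfolds to the left-hand side of [sum_rho_acoef]. *)
have -> : bcoef alpha N m J = bclosed (\sum_(i < d) alpha i) N m J.
  by rewrite -sum_rho_acoef.
by rewrite [RHS]mulrA bclosed_weight.
Qed.
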